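(* For non-negative integers $p_1,p_2$, a positive integer $r$, integers $k_1,k_2$ and $x_1,x_2\in\mathbb{C}$, $$\sum_{j_1=0}^{p_1}\sum_{j_2=0}^{p_2}\binom{p_1}{j_1}\binom{p_2}{j_2}\left(B^{(k_1)}_{p_1-j_1}(x_1+r)B^{(k_2)}_{p_2-j_2}(x_2+r)-B^{(k_1)}_{p_1-j_1}(x_1)B^{(k_2)}_{p_2-j_2}(x_2)\right)B_{j_1+j_2}$$ $$=\sum_{j_1=0}^{p_1}\sum_{j_2=0}^{p_2}\binom{p_1}{j_1}\binom{p_2}{j_2}B^{(k_1)}_{p_1-j_1}(x_1)B^{(k_2)}_{p_2-j_2}(x_2)\left(B_{j_1+j_2}(r)-B_{j_1+j_2}\right)$$ $$=p_1\sum_{t=0}^{r-1}B^{(k_1)}_{p_1-1}(x_1+t)B^{(k_2)}_{p_2}(x_2+t)+p_2\sum_{t=0}^{r-1}B^{(k_1)}_{p_1}(x_1+t)B^{(k_2)}_{p_2-1}(x_2+t),$$ where the term with $p_i$ as factor is interpreted as $0$ when $p_i=0$.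
   Context: For an integer $k$, a non-negative integer $n$ and $x\in\mathbb{C}$, the poly-Bernoulli polynomial is $B_{n}^{(k)}(x)=\sum_{l=0}^{n}\frac{1}{(l+1)^{k}}\sum_{j=0}^{l}(-1)^{j}\binom{l}{j}(j+x)^{n}$. $B_n(x)$ are the Bernoulli polynomials, $\frac{te^{xt}}{e^t-1}=\sum_{n\ge0}B_n(x)\frac{t^n}{n!}$, and $B_n=B_n(0)$ the Bernoulli numbers (so $B_1=-1/2$). *)

From HB Require Import structures.
From mathcomp Require Import all_boot all_order all_algebra.
From mathcomp Require Import complex.
From mathcomp Require Import reals.
Set Implicit Arguments. Unset Strict Implicit. Unset Printing Implicit Defensive.
Import Order.TTheory GRing.Theory Num.Theory.
Local Open Scope ring_scope.

(* Bernoulli numbers B_0, B_1, ... (convention B_1 = -1/2), i.e. the coefficients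
   of t/(e^t - 1), characterized by B_0 = 1 and
   sum_{k=0}^{n} C(n+1,k) B_k = 0 for n >= 1.
   bern_seq n is the list [:: B_0; ...; B_n]. *)
Fixpoint bern_seq (F : fieldType) (n : nat) : seq F :=
  match n with
  | 0 => [:: 1]
  | m.+1 => let s := bern_seq F m in
      rcons s (- (m.+2)%:R^-1 * \sum_(k < m.+2) ('C(m.+2, k))%:R * s`_k)
  end.

Definition bernoulli (F : fieldType) (n : nat) : F := (bern_seq F n)`_n.

(* Bernoulli polynomial B_n(x) = sum_k C(n,k) B_k x^(n-k), equivalently
   t e^{xt}/(e^t-1) = sum_n B_n(x) t^n/n!. *)
Definition bernoulli_poly (F : fieldType) (n : nat) (x : F) : F :=
  \sum_(k < n.+1) ('C(n, k))%:R * bernoulli F k * x ^+ (n - k).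

Definition poly_bernoulli (F : fieldType) (k : int) (n : nat) (x : F) : F :=
  \sum_(l < n.+1) (((l.+1)%:R : F) ^ k)^-1 *
    \sum_(j < l.+1) (-1) ^+ j * ('C(l, j))%:R * (j%:R + x) ^+ n.

From HB Require Import structures.
From mathcomp Require Import all_boot all_order all_algebra.
From mathcomp Require Import complex reals.
From mathcomp Require Import ring zify.
Set Implicit Arguments. Unset Strict Implicit. Unset Printing Implicit Defensive.
Import Order.TTheory GRing.Theory Num.Theory.
Local Open Scope ring_scope.

(* Both [B_n(x)] and [B_n^(k)(x)] are Appell sequences,
   [P_n(x + y) = sum_i C(n,i) P_(n-i)(x) y^i]; for the poly-Bernoulli
   polynomials this is because the inner alternating sum is a forward
   difference of [t^n], which vanishes beyond order [n]. Expanding the shifted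
   products this way and regrouping with the Vandermonde convolution turns
   [B_(j1+j2)] into [B_(j1+j2)(r)]. For the second identity write
   [B_m(r) - B_m = sum_(t<r) m t^(m-1)] and split [m t^(m-1)], [m = j1 + j2], by
   the Leibniz rule; each half reassembles into Appell expansions at [x_i + t]. *)

Lemma bin_trinomial p m j : (j <= m <= p)%N ->
  ('C(p, j) * 'C(p - j, m - j) = 'C(p, m) * 'C(m, j))%N.
Proof.
case/andP=> jm mp; have jp := leq_trans jm mp.
have fact_pos : (0 < j`! * (m - j)`! * (p - m)`!)%N by rewrite !muln_gt0 !fact_gt0.
apply/eqP; rewrite -(eqn_pmul2r fact_pos); apply/eqP.
transitivity ('C(p, j) * j`! * ('C(p - j, m - j) * ((m - j)`! * (p - j - (m - j))`!)))%N.
  have -> : (p - j - (m - j) = p - m)%N by lia.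
  ring.
transitivity ('C(p, m) * ('C(m, j) * (j`! * (m - j)`!)) * (p - m)`!)%N; last by ring.
by rewrite bin_fact ?leq_sub2r // -mulnA bin_fact // bin_fact // -mulnA bin_fact.
Qed.

Section BinomialConvolution.
Variable R : comPzRingType.

(* Binomial convolution: the exponential generating function of [bconv a b]
   is the product of those of [a] and [b]. *)
Definition bconv (a b : nat -> R) (n : nat) : R :=
  \sum_(i < n.+1) ('C(n, i))%:R * a (n - i)%N * b i.

Lemma eq_bconv (a a' b b' : nat -> R) : a =1 a' -> b =1 b' -> bconv a b =1 bconv a' b'.
Proof. by move=> eq_a eq_b n; apply: eq_bigr => i _; rewrite eq_a eq_b. Qed.

Lemma exprD_bconv (x y : R) n : (x + y) ^+ n = bconv (GRing.exp x) (GRing.exp y) n.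
Proof. by rewrite exprDn; apply: eq_bigr => i _; rewrite mulr_natl mulrnAl. Qed.

Lemma sum_binS (h : nat -> R) m :
  \sum_(j < m.+2) ('C(m.+1, j))%:R * h j =
  \sum_(j < m.+1) ('C(m, j))%:R * h j + \sum_(j < m.+1) ('C(m, j))%:R * h j.+1.
Proof.
rewrite big_ord_recl [in RHS]big_ord_recl /= !bin0 -addrA; congr (_ + _).
under eq_bigr => i _ do rewrite /bump /= add1n binS natrD mulrDl.
by rewrite big_split /= big_ord_recr /= bin_small // mul0r addr0.
Qed.

Lemma sum_bin2_Vandermonde (h : nat -> R) m1 m2 :
  \sum_(j1 < m1.+1) \sum_(j2 < m2.+1) ('C(m1, j1))%:R * ('C(m2, j2))%:R * h (j1 + j2)%N
  = \sum_(n < (m1 + m2).+1) ('C(m1 + m2, n))%:R * h n.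
Proof.
elim: m2 h => [|m2 IH] h.
  by rewrite addn0; apply: eq_bigr => j _; rewrite big_ord1 bin0 mulr1 addn0.
rewrite addnS sum_binS -IH -(IH (fun n => h n.+1)) -big_split /=; apply: eq_bigr => j1 _.
rewrite (eq_bigr (fun j2 : 'I_m2.+2 => ('C(m2.+1, j2))%:R * (('C(m1, j1))%:R * h (j1 + j2)%N)));
  last by move=> j2 _; ring.
rewrite (sum_binS (fun j => ('C(m1, j1))%:R * h (j1 + j)%N)).
by congr (_ + _); apply: eq_bigr => j2 _; rewrite ?addnS; ring.
Qed.

Lemma sum_triangle (G : nat -> nat -> R) p :
  \sum_(j < p.+1) \sum_(i < (p - j)%N.+1) G j i = \sum_(m < p.+1) \sum_(j < m.+1) G j (m - j)%N.
Proof.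
elim: p G => [|p IH] G; first by rewrite !big_ord1.
rewrite big_ord_recl /= subn0.
rewrite (eq_bigr (fun j : 'I_p.+1 => \sum_(i < (p - j)%N.+1) G j.+1 i)); last first.
  by move=> j _; rewrite /bump /= add1n subSS.
rewrite (IH (fun j i => G j.+1 i)) [in RHS]big_ord_recl big_ord1 subn0.
rewrite [X in X + _]big_ord_recl -addrA; congr (_ + _).
rewrite -big_split; apply: eq_bigr => m _ /=.
by rewrite /bump add1n [in RHS]big_ord_recl subn0; congr (_ + _).
Qed.

Lemma bconvA (a q c : nat -> R) : bconv (bconv a q) c =1 bconv a (bconv q c).
Proof.
move=> p; pose G j i := ('C(p, j))%:R * ('C(p - j, i))%:R * a (p - j - i)%N * q i * c j.
transitivity (\sum_(j < p.+1) \sum_(i < (p - j)%N.+1) G j i).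
  apply: eq_bigr => j _; rewrite mulr_sumr mulr_suml; apply: eq_bigr => i _; rewrite /G; ring.
rewrite sum_triangle; apply: eq_bigr => m _; rewrite mulr_sumr; apply: eq_bigr => j _.
have jmp : (j <= m <= p)%N by rewrite (ltnSE (ltn_ord j)) (ltnSE (ltn_ord m)).
have bin : ('C(p, j))%:R * ('C(p - j, m - j))%:R = ('C(p, m))%:R * ('C(m, j))%:R :> R.
  by rewrite -!natrM bin_trinomial.
rewrite {}/G bin.
have -> : (p - j - (m - j) = p - m)%N by lia.
ring.
Qed.

Lemma sum_bin2_bconv (a b q1 q2 : nat -> R) (c : nat -> nat -> R) p1 p2 :
  \sum_(j1 < p1.+1) \sum_(j2 < p2.+1) ('C(p1, j1))%:R * ('C(p2, j2))%:R *
     bconv a q1 (p1 - j1) * bconv b q2 (p2 - j2) * c j1 j2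
  = \sum_(m1 < p1.+1) \sum_(m2 < p2.+1) ('C(p1, m1))%:R * ('C(p2, m2))%:R *
     a (p1 - m1)%N * b (p2 - m2)%N *
     \sum_(j1 < m1.+1) \sum_(j2 < m2.+1) ('C(m1, j1))%:R * ('C(m2, j2))%:R *
        q1 (m1 - j1)%N * q2 (m2 - j2)%N * c j1 j2.
Proof.
pose inner j1 := bconv (bconv b q2) (c j1) p2.
transitivity (bconv (bconv a q1) inner p1).
  by apply: eq_bigr => j1 _; rewrite /inner /bconv mulr_sumr; apply: eq_bigr => j2 _; ring.
rewrite bconvA; apply: eq_bigr => m1 _.
rewrite /inner (eq_bconv (frefl q1) (fun j1 => bconvA b q2 (c j1) p2)) /bconv.
rewrite mulr_sumr; under eq_bigr do rewrite mulrA mulr_sumr.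
rewrite exchange_big /=; apply: eq_bigr => m2 _.
rewrite mulr_sumr; apply: eq_bigr => j1 _; rewrite !mulr_sumr; apply: eq_bigr => j2 _; ring.
Qed.

Lemma bconv_deriv (a : nat -> R) (t : R) p :
  bconv a (fun j => j%:R * t ^+ j.-1) p = p%:R * bconv a (GRing.exp t) p.-1.
Proof.
case: p => [|q]; first by rewrite /bconv !big_ord1 !mul0r mulr0.
rewrite /bconv big_ord_recl /= mul0r mulr0 add0r mulr_sumr; apply: eq_bigr => i _.
have bin : i.+1%:R * ('C(q.+1, i.+1))%:R = q.+1%:R * ('C(q, i))%:R :> R.
  by rewrite -!natrM -mul_bin_diag.
rewrite /bump add1n subSS add0n.
transitivity (i.+1%:R * ('C(q.+1, i.+1))%:R * (a (q - i)%N * t ^+ i)); first by ring.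
by rewrite bin; ring.
Qed.

Lemma sum_bin2_deriv (a b : nat -> R) (t : R) p1 p2 :
  \sum_(j1 < p1.+1) \sum_(j2 < p2.+1) ('C(p1, j1))%:R * ('C(p2, j2))%:R *
     a (p1 - j1)%N * b (p2 - j2)%N * ((j1 + j2)%:R * t ^+ (j1 + j2).-1)
  = p1%:R * bconv a (GRing.exp t) p1.-1 * bconv b (GRing.exp t) p2
  + p2%:R * bconv a (GRing.exp t) p1 * bconv b (GRing.exp t) p2.-1.
Proof.
have leibniz j1 j2 : (j1 + j2)%:R * t ^+ (j1 + j2).-1 =
    j1%:R * t ^+ j1.-1 * t ^+ j2 + t ^+ j1 * (j2%:R * t ^+ j2.-1) :> R.
  case: j1 => [|j1]; first by rewrite !mul0r add0r add0n expr0 mul1r.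
  case: j2 => [|j2]; first by rewrite addn0 !mul0r mulr0 addr0 expr0 mulr1.
  by rewrite addSn addnS /= !exprS exprD -!natr1 natrD; ring.
pose D j := j%:R * t ^+ j.-1.
transitivity (bconv a D p1 * bconv b (GRing.exp t) p2 + bconv a (GRing.exp t) p1 * bconv b D p2).
  rewrite /bconv !mulr_suml -big_split; apply: eq_bigr => j1 _.
  rewrite !mulr_sumr -big_split; apply: eq_bigr => j2 _; rewrite leibniz /D /=; ring.
by rewrite !bconv_deriv; ring.
Qed.
End BinomialConvolution.

Section ForwardDifference.
Variable R : comPzRingType.

(* [(-1)^l] times the [l]-th forward difference of [t |-> t ^+ m] at [x]. *)
Definition fdiff_pow (l m : nat) (x : R) : R :=
  \sum_(j < l.+1) (-1) ^+ j * ('C(l, j))%:R * (j%:R + x) ^+ m.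

Lemma fdiff_powD l m x y :
  fdiff_pow l m (x + y) = bconv (fun n => fdiff_pow l n x) (GRing.exp y) m.
Proof.
transitivity (\sum_(j < l.+1) \sum_(i < m.+1)
   ('C(m, i))%:R * ((-1) ^+ j * ('C(l, j))%:R * (j%:R + x) ^+ (m - i)) * y ^+ i).
  apply: eq_bigr => j _; rewrite addrA exprD_bconv mulr_sumr.
  by apply: eq_bigr => i _; ring.
by rewrite exchange_big; apply: eq_bigr => i _; rewrite mulr_sumr mulr_suml.
Qed.

Lemma fdiff_powS l m x : fdiff_pow l.+1 m x = fdiff_pow l m x - fdiff_pow l m (x + 1).
Proof.
rewrite /fdiff_pow (eq_bigr (fun j : 'I_l.+2 => ('C(l.+1, j))%:R * ((-1) ^+ j * (j%:R + x) ^+ m)));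
  last by move=> j _; ring.
rewrite (sum_binS (fun j => (-1) ^+ j * (j%:R + x) ^+ m)) -sumrN.
congr (_ + _); apply: eq_bigr => j _; first ring.
rewrite -natr1 exprS -(addrA _ 1 x) (addrC 1 x); ring.
Qed.

Lemma fdiff_pow_small l m x : (m < l)%N -> fdiff_pow l m x = 0.
Proof.
elim: l m x => [//|l IH] m x ml.
rewrite fdiff_powS fdiff_powD /bconv big_ord_recl subn0 bin0 expr0 mulr1 mul1r.
rewrite big1 ?addr0 ?subrr // => i _.
by rewrite IH ?mulr0 ?mul0r // lift0; have := ltn_ord i; lia.
Qed.

End ForwardDifference.

Lemma poly_bernoulliD (F : fieldType) (k : int) n (x y : F) :
  poly_bernoulli k n (x + y) = bconv (fun m => poly_bernoulli k m x) (GRing.exp y) n.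
Proof.
pose w l := (((l.+1)%:R : F) ^ k)^-1.
have widen m : (m <= n)%N -> poly_bernoulli k m x = \sum_(l < n.+1) w l * fdiff_pow l m x.
  move=> mn; change (\sum_(l < m.+1) w l * fdiff_pow l m x = \sum_(l < n.+1) w l * fdiff_pow l m x).
  rewrite (big_ord_widen n.+1 (fun l => w l * fdiff_pow l m x)) // big_mkcond.
  by apply: eq_bigr => l _; case: ltnP => // ml; rewrite fdiff_pow_small ?mulr0.
transitivity (\sum_(l < n.+1) w l * fdiff_pow l n (x + y)) => //.
under eq_bigr do rewrite fdiff_powD /bconv mulr_sumr.
rewrite exchange_big; apply: eq_bigr => i _ /=.
rewrite widen ?leq_subr // mulr_sumr mulr_suml; apply: eq_bigr => l _; ring.
Qed.

Section Bernoulli.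
Variable F : numFieldType.
Local Notation B := (@bernoulli F).
Local Notation Bp := (@bernoulli_poly F).

Lemma size_bern_seq n : size (bern_seq F n) = n.+1.
Proof. by elim: n => //= n IH; rewrite size_rcons IH. Qed.

Lemma nth_bern_seq n k : (k <= n)%N -> (bern_seq F n)`_k = B k.
Proof.
elim: n => [|n IH]; first by rewrite leqn0 => /eqP ->.
rewrite leq_eqVlt => /orP [/eqP -> //|]; rewrite ltnS => kn.
by rewrite /= nth_rcons size_bern_seq ltnS kn IH.
Qed.

Lemma sum_bin_bernoulli n : \sum_(k < n.+1) ('C(n, k))%:R * B k = B n + (n == 1)%:R.
Proof.
case: n => [|[|m]].
- by rewrite big_ord1 bin0 mul1r addr0.
- by rewrite !big_ord_recr big_ord0 /= add0r !bin1 bin0 !mul1r addrC.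
rewrite big_ord_recr /= binn mul1r addr0 -[RHS]add0r; congr (_ + _).
have B_rec : B m.+1 = - (m.+2)%:R^-1 * \sum_(k < m.+1) ('C(m.+2, k))%:R * B k.
  rewrite {1}/bernoulli /= nth_rcons size_bern_seq ltnn eqxx; congr (_ * _).
  rewrite big_ord_recr /= nth_default ?size_bern_seq // mulr0 addr0.
  by apply: eq_bigr => k _; rewrite nth_bern_seq // -ltnS.
rewrite big_ord_recr /= B_rec binSn mulrA mulrN mulfV ?pnatr_eq0 //.
by rewrite mulN1r addrN.
Qed.

Lemma bernoulli_polyE n x : Bp n x = bconv (GRing.exp x) B n.
Proof. by apply: eq_bigr => k _; rewrite mulrAC. Qed.

Lemma bernoulli_poly0 n : Bp n 0 = B n.
Proof.
rewrite /bernoulli_poly big_ord_recr /= subnn expr0 mulr1 binn mul1r big1 ?add0r //.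
by move=> i _; rewrite expr0n subn_eq0 leqNgt ltn_ord mulr0.
Qed.

Lemma bernoulli_polyD1 n x : Bp n (x + 1) = Bp n x + n%:R * x ^+ n.-1.
Proof.
have expD1 : GRing.exp (x + 1) =1 bconv (GRing.exp x) (fun=> 1).
  by move=> m; rewrite exprD_bconv; apply: eq_bconv => // i; rewrite expr1n.
rewrite !bernoulli_polyE (eq_bconv expD1 (frefl B)) bconvA.
transitivity (bconv (GRing.exp x) (fun i => B i + (i == 1)%:R) n).
  by apply: eq_bconv => // m; rewrite -sum_bin_bernoulli; apply: eq_bigr => i _; rewrite mulr1.
rewrite /bconv; under eq_bigr do rewrite mulrDr.
rewrite big_split /=; congr (_ + _).
case: n => [|n]; first by rewrite big_ord1 mulr0 mul0r.
rewrite big_ord_recl big_ord_recl /= big1 ?addr0; last by move=> i _; rewrite mulr0.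
by rewrite mulr0 add0r bin1 subn1 mulr1 mulrC.
Qed.

Lemma bernoulli_poly_natr_sub n r : Bp n r%:R - B n = \sum_(t < r) n%:R * t%:R ^+ n.-1.
Proof.
elim: r => [|r IH]; first by rewrite big_ord0 bernoulli_poly0 subrr.
by rewrite big_ord_recr /= -IH -natr1 bernoulli_polyD1 addrAC.
Qed.

Lemma sum_bin2_bernoulli (y : F) m1 m2 :
  \sum_(j1 < m1.+1) \sum_(j2 < m2.+1) ('C(m1, j1))%:R * ('C(m2, j2))%:R *
     y ^+ (m1 - j1) * y ^+ (m2 - j2) * B (j1 + j2)
  = Bp (m1 + m2) y.
Proof.
transitivity (\sum_(j1 < m1.+1) \sum_(j2 < m2.+1) ('C(m1, j1))%:R * ('C(m2, j2))%:R *
     (y ^+ (m1 + m2 - (j1 + j2)) * B (j1 + j2))).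
  apply: eq_bigr => j1 _; apply: eq_bigr => j2 _.
  have -> : (m1 + m2 - (j1 + j2) = (m1 - j1) + (m2 - j2))%N.
    by have := ltn_ord j1; have := ltn_ord j2; lia.
  by rewrite exprD; ring.
rewrite (sum_bin2_Vandermonde (fun n => y ^+ (m1 + m2 - n) * B n)) bernoulli_polyE.
by apply: eq_bigr => n _; rewrite mulrA.
Qed.

Lemma sum_bin2_bconv_bernoulli (a b : nat -> F) (y : F) p1 p2 :
  \sum_(j1 < p1.+1) \sum_(j2 < p2.+1) ('C(p1, j1))%:R * ('C(p2, j2))%:R *
     bconv a (GRing.exp y) (p1 - j1) * bconv b (GRing.exp y) (p2 - j2) * B (j1 + j2)
  = \sum_(j1 < p1.+1) \sum_(j2 < p2.+1) ('C(p1, j1))%:R * ('C(p2, j2))%:R *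
     a (p1 - j1)%N * b (p2 - j2)%N * Bp (j1 + j2) y.
Proof.
rewrite (sum_bin2_bconv _ _ _ _ (fun j1 j2 => B (j1 + j2))).
by apply: eq_bigr => m1 _; apply: eq_bigr => m2 _; rewrite sum_bin2_bernoulli.
Qed.

End Bernoulli.

Theorem sum_bin2_poly_bernoulli_shift (F : numFieldType) (p1 p2 r : nat) (k1 k2 : int)
    (x1 x2 : F) :
  \sum_(j1 < p1.+1) \sum_(j2 < p2.+1) ('C(p1, j1))%:R * ('C(p2, j2))%:R *
     (poly_bernoulli k1 (p1 - j1) (x1 + r%:R) * poly_bernoulli k2 (p2 - j2) (x2 + r%:R)
      - poly_bernoulli k1 (p1 - j1) x1 * poly_bernoulli k2 (p2 - j2) x2) * bernoulli F (j1 + j2)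
  = \sum_(j1 < p1.+1) \sum_(j2 < p2.+1) ('C(p1, j1))%:R * ('C(p2, j2))%:R *
     poly_bernoulli k1 (p1 - j1) x1 * poly_bernoulli k2 (p2 - j2) x2 *
     (bernoulli_poly (j1 + j2) r%:R - bernoulli F (j1 + j2)).
Proof.
pose a n := poly_bernoulli k1 n x1; pose b n := poly_bernoulli k2 n x2.
have := sum_bin2_bconv_bernoulli a b r%:R p1 p2.
under eq_bigr do under eq_bigr do rewrite -!poly_bernoulliD.
move=> shifted.
under eq_bigr do (under eq_bigr do rewrite mulrBr mulrBl !mulrA; rewrite sumrB).
under [RHS]eq_bigr do (under eq_bigr do rewrite mulrBr; rewrite sumrB).
by rewrite !sumrB shifted.
Qed.

Theorem sum_bin2_poly_bernoulli_bernoulli_diff (F : numFieldType) (p1 p2 r : nat)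
    (k1 k2 : int) (x1 x2 : F) :
  \sum_(j1 < p1.+1) \sum_(j2 < p2.+1) ('C(p1, j1))%:R * ('C(p2, j2))%:R *
     poly_bernoulli k1 (p1 - j1) x1 * poly_bernoulli k2 (p2 - j2) x2 *
     (bernoulli_poly (j1 + j2) r%:R - bernoulli F (j1 + j2))
  = p1%:R * \sum_(t < r) poly_bernoulli k1 p1.-1 (x1 + t%:R) * poly_bernoulli k2 p2 (x2 + t%:R)
    + p2%:R * \sum_(t < r) poly_bernoulli k1 p1 (x1 + t%:R) * poly_bernoulli k2 p2.-1 (x2 + t%:R).
Proof.
under eq_bigr do (under eq_bigr do rewrite bernoulli_poly_natr_sub mulr_sumr; rewrite exchange_big).
rewrite exchange_big !mulr_sumr -big_split; apply: eq_bigr => t _ /=.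
rewrite (sum_bin2_deriv (fun n => poly_bernoulli k1 n x1) (fun n => poly_bernoulli k2 n x2)).
by rewrite -!poly_bernoulliD; ring.
Qed.

Theorem mainTheorem13 (R : realType) (p1 p2 r : nat) (k1 k2 : int)
    (x1 x2 : R[i]) (hr : (0 < r)%N) :
  let PB := @poly_bernoulli R[i] in
  let B := @bernoulli R[i] in
  let Bp := @bernoulli_poly R[i] in
  \sum_(j1 < p1.+1) \sum_(j2 < p2.+1)
     ('C(p1, j1))%:R * ('C(p2, j2))%:R *
     (PB k1 (p1 - j1)%N (x1 + r%:R) * PB k2 (p2 - j2)%N (x2 + r%:R)
      - PB k1 (p1 - j1)%N x1 * PB k2 (p2 - j2)%N x2) * B (j1 + j2)%N
  = \sum_(j1 < p1.+1) \sum_(j2 < p2.+1)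
     ('C(p1, j1))%:R * ('C(p2, j2))%:R *
     PB k1 (p1 - j1)%N x1 * PB k2 (p2 - j2)%N x2 *
     (Bp (j1 + j2)%N r%:R - B (j1 + j2)%N)
  /\
  \sum_(j1 < p1.+1) \sum_(j2 < p2.+1)
     ('C(p1, j1))%:R * ('C(p2, j2))%:R *
     PB k1 (p1 - j1)%N x1 * PB k2 (p2 - j2)%N x2 *
     (Bp (j1 + j2)%N r%:R - B (j1 + j2)%N)
  = p1%:R * \sum_(t < r) PB k1 p1.-1 (x1 + t%:R) * PB k2 p2 (x2 + t%:R)
    + p2%:R * \sum_(t < r) PB k1 p1 (x1 + t%:R) * PB k2 p2.-1 (x2 + t%:R).
Proof.
split; [exact: sum_bin2_poly_bernoulli_shift | exact: sum_bin2_poly_bernoulli_bernoulli_diff].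
Qed.
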